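(* The theory $\mathrm{IKP}$ does not prove $\mathrm{PlUb}$. Specifically, $1 \in \mathrm{PlOrd}$, yet $\mathrm{IKP}$ does not prove that the plump successor $1^{\mathrm{pl}+}$ exists as a set.
   Context: $\mathrm{IKP}$ is intuitionistic Kripke–Platek set theory (with strong infinity). An ordinal is a transitive set of transitive sets. For sets $\alpha,\gamma$, $\mathrm{relpl}_\alpha(\gamma)$ denotes $\forall \delta \in \gamma\ \forall \varepsilon \in \alpha\,(\varepsilon \subseteq \delta \rightarrow \varepsilon \in \gamma)$. $\mathrm{PlOrd}$ is the class of ordinals $\alpha$ such that for all $\beta \in \alpha$ and all $\gamma \subseteq \beta$ with $\mathrm{relpl}_\alpha(\gamma)$, we have $\gamma \in \alpha$ and $\forall \delta \in \alpha\,(\beta \in \delta \rightarrow \gamma \in \delta)$. For $\alpha \in \mathrm{PlOrd}$, the plump successor is $\alpha^{\mathrm{pl}+} = \{\beta \subseteq \alpha : \mathrm{relpl}_\alpha(\beta)\} = \mathcal{P}(\alpha) \cap \mathrm{PlOrd}$ (when this is a set). $\mathrm{PlUb}$ is the axiom $\forall \alpha \in \mathrm{PlOrd}\ \exists \beta \in \mathrm{PlOrd}\ \alpha \in \beta$. *)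

(* Deep embedding of intuitionistic first-order set theory (language {∈,=}),
   intuitionistic natural deduction, and the axioms of IKP (with strong
   infinity).  Variables are de Bruijn indices. *)
From Stdlib Require Import List.
Import ListNotations.

Inductive form : Type :=
| Mem : nat -> nat -> form          (* Mem x y  is  x ∈ y *)
| Eq  : nat -> nat -> form
| Bot : form
| And : form -> form -> form
| Or  : form -> form -> form
| Imp : form -> form -> form
| All : form -> form
| Ex  : form -> form.

Definition Neg (p : form) : form := Imp p Bot.
Definition Iff (p q : form) : form := And (Imp p q) (Imp q p).

(* renaming of free variables (terms are variables, so this is substitution) *)
Definition up (r : nat -> nat) : nat -> nat :=
  fun n => match n with 0 => 0 | S m => S (r m) end.

Fixpoint ren (r : nat -> nat) (p : form) : form :=
  match p with
  | Mem x y => Mem (r x) (r y)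
  | Eq x y => Eq (r x) (r y)
  | Bot => Bot
  | And a b => And (ren r a) (ren r b)
  | Or a b => Or (ren r a) (ren r b)
  | Imp a b => Imp (ren r a) (ren r b)
  | All a => All (ren (up r) a)
  | Ex a => Ex (ren (up r) a)
  end.

(* p[x/0] : substitute variable x for index 0 (and lower the others) *)
Definition inst (x : nat) (p : form) : form :=
  ren (fun n => match n with 0 => x | S m => m end) p.

Inductive prf : list form -> form -> Prop :=
| P_ax   G p : In p G -> prf G p
| P_botE G p : prf G Bot -> prf G p
| P_andI G p q : prf G p -> prf G q -> prf G (And p q)
| P_andE1 G p q : prf G (And p q) -> prf G p
| P_andE2 G p q : prf G (And p q) -> prf G q
| P_orI1 G p q : prf G p -> prf G (Or p q)
| P_orI2 G p q : prf G q -> prf G (Or p q)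
| P_orE G p q r : prf G (Or p q) -> prf (p :: G) r -> prf (q :: G) r -> prf G r
| P_impI G p q : prf (p :: G) q -> prf G (Imp p q)
| P_impE G p q : prf G (Imp p q) -> prf G p -> prf G q
| P_allI G p : prf (map (ren S) G) p -> prf G (All p)
| P_allE G p x : prf G (All p) -> prf G (inst x p)
| P_exI G p x : prf G (inst x p) -> prf G (Ex p)
| P_exE G p q : prf G (Ex p) -> prf (p :: map (ren S) G) (ren S q) -> prf G q
| P_refl G x : prf G (Eq x x)
| P_subst G p x y : prf G (Eq x y) -> prf G (inst x p) -> prf G (inst y p).

Definition Provable (T : form -> Prop) (p : form) : Prop :=
  exists G, (forall q, In q G -> T q) /\ prf G p.

(* Helpers: all index arguments are relative to the current context *)
Definition BAll (a : nat) (p : form) : form := All (Imp (Mem 0 (S a)) p).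
Definition BEx (a : nat) (p : form) : form := Ex (And (Mem 0 (S a)) p).
Definition Sub (a b : nat) : form := All (Imp (Mem 0 (S a)) (Mem 0 (S b))).

Inductive Delta0 : form -> Prop :=
| D_mem x y : Delta0 (Mem x y)
| D_eq x y : Delta0 (Eq x y)
| D_bot : Delta0 Bot
| D_and p q : Delta0 p -> Delta0 q -> Delta0 (And p q)
| D_or p q : Delta0 p -> Delta0 q -> Delta0 (Or p q)
| D_imp p q : Delta0 p -> Delta0 q -> Delta0 (Imp p q)
| D_ball a p : Delta0 p -> Delta0 (BAll a p)
| D_bex a p : Delta0 p -> Delta0 (BEx a p).

(* Ind(w): ∃e∈w (e empty) ∧ ∀x∈w ∃s∈w (x∈s ∧ x⊆s ∧ ∀z∈s (z∈x ∨ z=x)) *)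
Definition Ind (w : nat) : form :=
  And (BEx w (BAll 0 Bot))
      (BAll w (BEx (S w) (And (Mem 1 0) (And (Sub 1 0) (BAll 0 (Or (Mem 0 2) (Eq 0 2))))))).

Definition Ax_ext : form :=
  All (All (Imp (All (Iff (Mem 0 2) (Mem 0 1))) (Eq 1 0))).
Definition Ax_pair : form := All (All (Ex (And (Mem 2 0) (Mem 1 0)))).
Definition Ax_union : form := All (Ex (BAll 1 (BAll 0 (Mem 0 2)))).
(* strong infinity: there is a least inductive set *)
Definition Ax_inf : form := Ex (And (Ind 0) (All (Imp (Ind 0) (Sub 1 0)))).

(* Δ0-separation, p(x, params): index 0 = x, index k+1 = parameter k.
   ∀a ∃b ∀x (x∈b ↔ x∈a ∧ p) *)
Definition Ax_sep (p : form) : form :=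
  All (Ex (All (Iff (Mem 0 1) (And (Mem 0 2) (ren (up (fun n => n + 2)) p))))).

(* Δ0-collection, p(y, x, params): index 0 = y, 1 = x, k+2 = parameter k.
   ∀a (∀x∈a ∃y p → ∃b ∀x∈a ∃y∈b p) *)
Definition Ax_coll (p : form) : form :=
  All (Imp (All (Imp (Mem 0 1) (Ex (ren (fun n => if Nat.ltb n 2 then n else n + 1) p))))
           (Ex (All (Imp (Mem 0 2) (Ex (And (Mem 0 2)
                  (ren (fun n => if Nat.ltb n 2 then n else n + 2) p))))))).

(* set induction, p(a, params): index 0 = a, k+1 = parameter k.
   ∀a ((∀x∈a p(x)) → p(a)) → ∀a p(a) *)
Definition Ax_ind (p : form) : form :=
  Imp (All (Imp (All (Imp (Mem 0 1) (ren (up S) p))) p)) (All p).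

(* IKP; schema instances may contain free parameters (the axiom set is closed
   under renaming, so this is equivalent to taking universal closures) *)
Inductive IKP : form -> Prop :=
| IKP_ext : IKP Ax_ext
| IKP_pair : IKP Ax_pair
| IKP_union : IKP Ax_union
| IKP_inf : IKP Ax_inf
| IKP_sep p : Delta0 p -> IKP (Ax_sep p)
| IKP_coll p : Delta0 p -> IKP (Ax_coll p)
| IKP_setind p : IKP (Ax_ind p).

Definition Trans (a : nat) : form := BAll a (Sub 0 (S a)).
Definition Ord (a : nat) : form := And (Trans a) (BAll a (Trans 0)).
(* relpl_α(γ) := ∀δ∈γ ∀ε∈α (ε ⊆ δ → ε ∈ γ) *)
Definition relpl (al ga : nat) : form :=
  BAll ga (BAll (S al) (Imp (Sub 0 1) (Mem 0 (S (S ga))))).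
(* PlOrd(α) := Ord(α) ∧ ∀β∈α ∀γ (γ⊆β → relpl_α(γ) → γ∈α ∧ ∀δ∈α (β∈δ → γ∈δ)) *)
Definition PlOrd (al : nat) : form :=
  And (Ord al)
      (BAll al (All (Imp (Sub 0 1) (Imp (relpl (S (S al)) 0)
          (And (Mem 0 (S (S al))) (BAll (S (S al)) (Imp (Mem 2 0) (Mem 1 0)))))))).
(* o = 1 = {∅} :  ∀z (z∈o ↔ ∀w (w∈z → ⊥)) *)
Definition IsOne (o : nat) : form := All (Iff (Mem 0 (S o)) (All (Imp (Mem 0 1) Bot))).
(* y = α^{pl+} :  ∀β (β∈y ↔ β⊆α ∧ relpl_α(β)) *)
Definition IsPlSucc (al y : nat) : form :=
  All (Iff (Mem 0 (S y)) (And (Sub 0 (S al)) (relpl (S al) 0))).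

Definition One_exists : form := Ex (IsOne 0).
Definition One_PlOrd : form := All (Imp (IsOne 0) (PlOrd 0)).
Definition One_plsucc_exists : form := All (Imp (IsOne 0) (Ex (IsPlSucc 1 0))).
(* PlUb := ∀α ∈ PlOrd ∃β ∈ PlOrd (α ∈ β) *)
Definition PlUb : form := All (Imp (PlOrd 0) (Ex (And (PlOrd 0) (Mem 1 0)))).

(* All of IKP is forced in a Kripke model whose sets are well-founded, countably
   branching trees, each member being attached to an upward-closed set of worlds.
   Take the frame with a root below leaves indexed by the naturals.  There 1 = {∅}
   is a plump ordinal, and for every A ⊆ ℕ the set 1_A, containing ∅ exactly at the
   leaves in A, is a plump subset of 1.  A set forced at the root to contain every
   1_A has only countably many members and so would enumerate all subsets of ℕ,
   which Cantor's diagonal argument forbids.  Hence neither 1^pl+ nor a plump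
   ordinal containing 1 exists. *)

From Stdlib Require Import List Arith Cantor ClassicalEpsilon.
Import ListNotations.

(** * Kripke sets over a countable frame *)

Record countable_frame := {
  world :> Type;
  wle : world -> world -> Prop;
  wle_refl : forall w, wle w w;
  wle_trans : forall u v t, wle u v -> wle v t -> wle u t;
  world_of_nat : nat -> world;
  world_of_nat_onto : forall w, exists n, world_of_nat n = w
}.
Arguments wle {c} _ _.
Arguments wle_refl {c} w.
Arguments wle_trans {c u v t} _ _.
Arguments world_of_nat {c} _.
Arguments world_of_nat_onto {c} w.

Section KripkeSets.

Context {F : countable_frame}.

#[local] Hint Resolve wle_refl : core.

(* [ksup f p] has the member [f i] at every world above one where [p i] holds. *)
Inductive kset : Type :=
| kempty : kset
| ksup : (nat -> kset) -> (nat -> F -> Prop) -> kset.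

Definition kelem (a : kset) (i : nat) : kset :=
  match a with kempty => kempty | ksup f _ => f i end.

Definition kval (a : kset) (i : nat) (w : F) : Prop :=
  match a with kempty => False | ksup _ p => p i w end.

Definition present (a : kset) (i : nat) (v : F) : Prop :=
  exists u, wle u v /\ kval a i u.

Lemma present_mono a i v t : present a i v -> wle v t -> present a i t.
Proof. intros [u [Huv Hu]] Hvt; exists u; split; [exact (wle_trans Huv Hvt)|exact Hu]. Qed.

Lemma kset_mem_ind (P : kset -> Prop) :
  (forall a, (forall i u, kval a i u -> P (kelem a i)) -> P a) -> forall a, P a.
Proof.
  intros H a; induction a as [|f IH p]; apply H; simpl.
  - intros i u [].
  - intros i _ _; apply IH.
Qed.

Fixpoint keq (a b : kset) (w : F) {struct a} : Prop :=
  match a with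
  | kempty => forall j v, wle w v -> present b j v -> False
  | ksup f _ =>
      (forall i v, wle w v -> present a i v ->
         exists j, present b j v /\ keq (f i) (kelem b j) v) /\
      (forall j v, wle w v -> present b j v ->
         exists i, present a i v /\ keq (f i) (kelem b j) v)
  end.

Definition keq_members (a b : kset) (w : F) : Prop :=
  (forall i v, wle w v -> present a i v ->
     exists j, present b j v /\ keq (kelem a i) (kelem b j) v) /\
  (forall j v, wle w v -> present b j v ->
     exists i, present a i v /\ keq (kelem a i) (kelem b j) v).

Lemma keq_unfold a b w : keq a b w <-> keq_members a b w.
Proof.
  unfold keq_members; destruct a as [|f p]; simpl; [|tauto].
  split.
  - intros H; split.
    + intros i v _ [u [_ []]].
    + intros j v Hv Hp; exfalso; exact (H j v Hv Hp).
  - intros [_ H] j v Hv Hp. destruct (H j v Hv Hp) as [i [[u [_ []]] _]].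
Qed.

Lemma keq_mono a b w v : keq a b w -> wle w v -> keq a b v.
Proof.
  rewrite !keq_unfold; intros [H1 H2] Hwv; split; intros ? t Hvt;
    [apply H1|apply H2]; exact (wle_trans Hwv Hvt).
Qed.

Lemma keq_refl a w : keq a a w.
Proof.
  revert w; induction a as [a IH] using kset_mem_ind; intro w.
  rewrite keq_unfold; split; intros i v _ Hp; exists i; split; auto;
    destruct Hp as [u [_ Hu]]; exact (IH i u Hu v).
Qed.

Lemma keq_sym a b w : keq a b w -> keq b a w.
Proof.
  revert b w; induction a as [a IH] using kset_mem_ind; intros b w.
  rewrite !keq_unfold; intros [H1 H2]; split.
  - intros j v Hv Hp. destruct (H2 j v Hv Hp) as [i [[u [Hu Hi]] He]].
    exists i; split; [exists u; auto|exact (IH i u Hi _ _ He)].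
  - intros i v Hv [u [Hu Hi]]. destruct (H1 i v Hv (ex_intro _ u (conj Hu Hi))) as [j [Hj He]].
    exists j; split; [exact Hj|exact (IH i u Hi _ _ He)].
Qed.

Lemma keq_trans a b c w : keq a b w -> keq b c w -> keq a c w.
Proof.
  revert b c w; induction a as [a IH] using kset_mem_ind; intros b c w.
  rewrite !keq_unfold; intros [H1 H2] [K1 K2]; split.
  - intros i v Hv [u [Hu Hi]].
    destruct (H1 i v Hv (ex_intro _ u (conj Hu Hi))) as [j [Hj He]].
    destruct (K1 j v Hv Hj) as [k [Hk Hf]].
    exists k; split; [exact Hk|exact (IH i u Hi _ _ _ He Hf)].
  - intros k v Hv Hk. destruct (K2 k v Hv Hk) as [j [Hj He]].
    destruct (H2 j v Hv Hj) as [i [[u [Hu Hi]] Hf]].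
    exists i; split; [exists u; auto|exact (IH i u Hi _ _ _ Hf He)].
Qed.

Definition kmem (x b : kset) (w : F) : Prop :=
  exists j, present b j w /\ keq x (kelem b j) w.

Lemma kmem_mono x b w v : kmem x b w -> wle w v -> kmem x b v.
Proof.
  intros [j [H1 H2]] Hwv; exists j; split; [eapply present_mono|eapply keq_mono]; eauto.
Qed.

Lemma kmem_keq_l x x' b w : keq x x' w -> kmem x b w -> kmem x' b w.
Proof.
  intros He [j [H1 H2]]; exists j; split; [exact H1|].
  eapply keq_trans; [apply keq_sym, He|exact H2].
Qed.

Lemma kmem_keq_r x b b' w v : keq b b' w -> wle w v -> kmem x b v -> kmem x b' v.
Proof.
  intros He Hwv [j [H1 H2]]. rewrite keq_unfold in He. destruct He as [K _].
  destruct (K j v Hwv H1) as [k [Hk Hf]].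
  exists k; split; [exact Hk|eapply keq_trans; eauto].
Qed.

Lemma kmem_kelem a i w : present a i w -> kmem (kelem a i) a w.
Proof. intros H; exists i; split; [exact H|apply keq_refl]. Qed.

Lemma kmem_kempty z v : ~ kmem z kempty v.
Proof. intros [j [[u [_ []]] _]]. Qed.

Lemma keq_ext a b w :
  (forall v, wle w v -> forall z, (kmem z a v -> kmem z b v) /\ (kmem z b v -> kmem z a v)) ->
  keq a b w.
Proof.
  intros H; rewrite keq_unfold; split.
  - intros i v Hv Hp.
    destruct (proj1 (H v Hv (kelem a i)) (kmem_kelem _ _ _ Hp)) as [j [Hj Hf]].
    exists j; auto.
  - intros j v Hv Hp.
    destruct (proj2 (H v Hv (kelem b j)) (kmem_kelem _ _ _ Hp)) as [i [Hi Hf]].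
    exists i; split; [exact Hi|apply keq_sym, Hf].
Qed.

Lemma keq_kempty e w : (forall z v, wle w v -> kmem z e v -> False) -> keq e kempty w.
Proof.
  intros H. apply keq_ext. intros v Hv z.
  split; intros Hz; exfalso; [exact (H z v Hv Hz)|exact (kmem_kempty _ _ Hz)].
Qed.

(** * Forcing and soundness *)

Definition scons (d : kset) (r : nat -> kset) (n : nat) : kset :=
  match n with 0 => d | S m => r m end.

Fixpoint forces (w : F) (r : nat -> kset) (p : form) : Prop :=
  match p with
  | Mem x y => kmem (r x) (r y) w
  | Eq x y => keq (r x) (r y) w
  | Bot => False
  | And a b => forces w r a /\ forces w r b
  | Or a b => forces w r a \/ forces w r b
  | Imp a b => forall v, wle w v -> forces v r a -> forces v r b
  | All a => forall d, forces w (scons d r) a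
  | Ex a => exists d, forces w (scons d r) a
  end.

Lemma forces_mono p : forall w v r, forces w r p -> wle w v -> forces v r p.
Proof.
  induction p; simpl; intros w v r H Hwv.
  - eapply kmem_mono; eauto.
  - eapply keq_mono; eauto.
  - exact H.
  - destruct H; split; eauto.
  - destruct H; [left|right]; eauto.
  - intros t Hvt; apply H; eapply wle_trans; eauto.
  - intros d; eauto.
  - destruct H as [d Hd]; exists d; eauto.
Qed.

Lemma forces_ren p : forall w r r' s,
  (forall n, r (s n) = r' n) -> (forces w r (ren s p) <-> forces w r' p).
Proof.
  assert (Hup : forall (r r' : nat -> kset) s d,
            (forall n, r (s n) = r' n) -> forall n, scons d r (up s n) = scons d r' n)
    by (intros r r' s d Hs [|n]; simpl; auto).
  induction p; simpl; intros w r r' s Hs.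
  - rewrite !Hs; reflexivity.
  - rewrite !Hs; reflexivity.
  - reflexivity.
  - rewrite (IHp1 w r r' s Hs), (IHp2 w r r' s Hs); reflexivity.
  - rewrite (IHp1 w r r' s Hs), (IHp2 w r r' s Hs); reflexivity.
  - split; intros H v Hv; specialize (H v Hv);
      rewrite (IHp1 v r r' s Hs), (IHp2 v r r' s Hs) in *; exact H.
  - split; intros H d; specialize (H d);
      rewrite (IHp w (scons d r) (scons d r') (up s) (Hup r r' s d Hs)) in *; exact H.
  - split; intros [d H]; exists d;
      rewrite (IHp w (scons d r) (scons d r') (up s) (Hup r r' s d Hs)) in *; exact H.
Qed.

Lemma forces_inst w r x p : forces w r (inst x p) <-> forces w (scons (r x) r) p.
Proof. apply forces_ren; intros [|n]; reflexivity. Qed.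

Lemma forces_renS w r d p : forces w (scons d r) (ren S p) <-> forces w r p.
Proof. apply forces_ren; reflexivity. Qed.

Definition env_keq (r r' : nat -> kset) (w : F) : Prop := forall n, keq (r n) (r' n) w.

Lemma env_keq_scons d r r' w : env_keq r r' w -> env_keq (scons d r) (scons d r') w.
Proof. intros H [|n]; simpl; [apply keq_refl|apply H]. Qed.

Lemma forces_env_keq p : forall w r r', env_keq r r' w -> forces w r p -> forces w r' p.
Proof.
  induction p; simpl; intros w r r' He H.
  - eapply kmem_keq_r; [apply He|apply wle_refl|]. eapply kmem_keq_l; [apply He|exact H].
  - eapply keq_trans; [apply keq_sym, He|]. eapply keq_trans; [apply H|apply He].
  - exact H.
  - destruct H; split; eauto.
  - destruct H; [left|right]; eauto.
  - intros v Hv H1. eapply IHp2; [intro n; eapply keq_mono; [apply He|exact Hv]|].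
    apply H; [exact Hv|]. eapply IHp1; [|exact H1].
    intro n; apply keq_sym; eapply keq_mono; [apply He|exact Hv].
  - intros d; eapply IHp; [apply env_keq_scons, He|apply H].
  - destruct H as [d Hd]; exists d; eapply IHp; [apply env_keq_scons, He|exact Hd].
Qed.

Theorem prf_sound G p : prf G p ->
  forall w rho, (forall q, In q G -> forces w rho q) -> forces w rho p.
Proof.
  induction 1; intros w rho HG; simpl in *.
  - auto.
  - destruct (IHprf w rho HG).
  - split; auto.
  - apply (IHprf w rho HG).
  - apply (IHprf w rho HG).
  - left; auto.
  - right; auto.
  - destruct (IHprf1 w rho HG) as [H2|H2].
    + apply IHprf2; intros q' [<-|Hq]; auto.
    + apply IHprf3; intros q' [<-|Hq]; auto.
  - intros v Hv Hp. apply IHprf; intros q' [<-|Hq]; [exact Hp|].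
    eapply forces_mono; eauto.
  - apply (IHprf1 w rho HG); auto.
  - intros d. apply IHprf. intros q' Hq. apply in_map_iff in Hq.
    destruct Hq as [q0 [<- Hq0]]. apply forces_renS; auto.
  - apply forces_inst, (IHprf w rho HG).
  - exists (rho x). apply forces_inst, IHprf, HG.
  - destruct (IHprf1 w rho HG) as [d Hd].
    apply (forces_renS w rho d). apply IHprf2. intros q' [<-|Hq]; [exact Hd|].
    apply in_map_iff in Hq. destruct Hq as [q0 [<- Hq0]]. apply forces_renS; auto.
  - apply keq_refl.
  - apply forces_inst. pose proof (IHprf2 w rho HG) as K. apply forces_inst in K.
    eapply forces_env_keq; [|exact K].
    intros [|n]; simpl; [apply (IHprf1 w rho HG)|apply keq_refl].
Qed.

(** * Validity of IKP *)

Lemma forces_Ax_ext w r : forces w r Ax_ext.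
Proof.
  simpl. intros a b v _ H. apply keq_ext. intros t Ht z.
  destruct (H z) as [H1 H2]. split; auto.
Qed.

Definition kpair (x y : kset) : kset :=
  ksup (fun n => match n with 0 => x | _ => y end) (fun _ _ => True).

Lemma forces_Ax_pair w r : forces w r Ax_pair.
Proof.
  simpl. intros x y. exists (kpair x y).
  split; [exists 0|exists 1]; (split; [exists w; split; simpl; auto|apply keq_refl]).
Qed.

Definition kunion (a : kset) : kset :=
  ksup (fun n => kelem (kelem a (fst (of_nat n))) (snd (of_nat n)))
       (fun n v => present a (fst (of_nat n)) v /\
                   present (kelem a (fst (of_nat n))) (snd (of_nat n)) v).

Lemma forces_Ax_union w r : forces w r Ax_union.
Proof.
  simpl. intros a. exists (kunion a). intros x v _ [j [Hj Hx]] z t Ht Hz.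
  assert (Hz' : kmem z (kelem a j) t) by (eapply kmem_keq_r; eauto).
  destruct Hz' as [k [Hk Hzk]].
  exists (to_nat (j, k)). unfold present, kval, kelem, kunion.
  rewrite cancel_of_to. simpl. split; [|exact Hzk].
  exists t; split; [apply wle_refl|]. split; [eapply present_mono; eauto|exact Hk].
Qed.

Definition ksep (a : kset) (P : kset -> F -> Prop) : kset :=
  ksup (kelem a) (fun i v => present a i v /\ P (kelem a i) v).

Lemma forces_Ax_sep w r p : forces w r (Ax_sep p).
Proof.
  assert (R : forall v x b a,
             forces v (scons x (scons b (scons a r))) (ren (up (fun n => n + 2)) p)
             <-> forces v (scons x r) p)
    by (intros; apply forces_ren; intros [|n]; simpl; [|rewrite Nat.add_comm]; reflexivity).
  simpl. intros a. exists (ksep a (fun y v => forces v (scons y r) p)). intros x. split.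
  - intros v _ [j [[u [Hu [Hj HP]]] He]]. simpl in He. split.
    + exists j; split; [eapply present_mono; eauto|exact He].
    + apply R. eapply forces_env_keq; [|eapply forces_mono; eauto].
      intros [|n]; simpl; [apply keq_sym, He|apply keq_refl].
  - intros v _ [[j [Hj He]] HP]. apply R in HP.
    exists j; split; [exists v; split; [apply wle_refl|split; [exact Hj|]]|exact He].
    eapply forces_env_keq; [|exact HP]. intros [|n]; simpl; [exact He|apply keq_refl].
Qed.

(* The collecting set has, for each member index [j] and world index [k], the member
   chosen as a witness for [kelem a j] at [world_of_nat k]; this is where countability
   of the frame is used. *)
Lemma forces_Ax_coll w r p : forces w r (Ax_coll p).
Proof.
  assert (R1 : forall t y x a,
             forces t (scons y (scons x (scons a r)))
               (ren (fun n => if Nat.ltb n 2 then n else n + 1) p)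
             <-> forces t (scons y (scons x r)) p)
    by (intros; apply forces_ren; intros [|[|n]]; simpl; [..|rewrite Nat.add_1_r]; reflexivity).
  assert (R2 : forall t y x b a,
             forces t (scons y (scons x (scons b (scons a r))))
               (ren (fun n => if Nat.ltb n 2 then n else n + 2) p)
             <-> forces t (scons y (scons x r)) p)
    by (intros; apply forces_ren; intros [|[|n]]; simpl; [..|rewrite Nat.add_comm]; reflexivity).
  simpl. intros a v _ Hc.
  set (witness := fun n => epsilon (inhabits kempty) (fun y =>
         forces (world_of_nat (snd (of_nat n))) (scons y (scons (kelem a (fst (of_nat n))) r)) p)).
  exists (ksup witness (fun n u => u = world_of_nat (snd (of_nat n)) /\
                                   present a (fst (of_nat n)) u)).
  intros x t Ht [j [Hj Hx]].
  destruct (Hc (kelem a j) t Ht (kmem_kelem _ _ _ Hj)) as [y Hy]. apply R1 in Hy.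
  destruct (world_of_nat_onto t) as [k Hk].
  set (n := to_nat (j, k)).
  assert (Hn : of_nat n = (j, k)) by apply cancel_of_to.
  assert (Hw : forces t (scons (witness n) (scons (kelem a j) r)) p).
  { unfold witness. rewrite Hn; simpl. rewrite Hk.
    apply (epsilon_spec (inhabits kempty)
             (fun y => forces t (scons y (scons (kelem a j) r)) p)).
    exists y; exact Hy. }
  exists (witness n). split.
  - exists n. split; [|apply keq_refl].
    exists t. split; [apply wle_refl|]. simpl. rewrite Hn. simpl. auto.
  - apply R2. eapply forces_env_keq; [|exact Hw].
    intros [|[|m]]; simpl; [apply keq_refl|apply keq_sym, Hx|apply keq_refl].
Qed.

Lemma forces_Ax_ind w r p : forces w r (Ax_ind p).
Proof.
  assert (R : forall s x a, forces s (scons x (scons a r)) (ren (up S) p)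
                            <-> forces s (scons x r) p)
    by (intros; apply forces_ren; intros [|n]; reflexivity).
  simpl. intros v _ H.
  enough (K : forall a t, wle v t -> forces t (scons a r) p) by (intro a; apply K, wle_refl).
  intros a; induction a as [a IH] using kset_mem_ind. intros t Ht. apply H; [exact Ht|].
  intros x s Hs [j [[u [Hu Hj]] Hx]]. apply R.
  eapply forces_env_keq; [|apply (IH j u Hj s (wle_trans Ht Hs))].
  intros [|n]; simpl; [apply keq_sym, Hx|apply keq_refl].
Qed.

Definition ksucc (x : kset) : kset :=
  ksup (fun n => match n with 0 => x | S k => kelem x k end)
       (fun n v => match n with 0 => True | S k => kval x k v end).

Lemma kmem_ksucc z x v : kmem z (ksucc x) v <-> keq z x v \/ kmem z x v.
Proof.
  split.
  - intros [[|j] [Hj He]]; [left; exact He|right].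
    exists j; split; [exact Hj|exact He].
  - intros [H|[j [Hj He]]].
    + exists 0; split; [exists v; split; simpl; auto|exact H].
    + exists (S j); split; [exact Hj|exact He].
Qed.

Fixpoint knat (n : nat) : kset :=
  match n with 0 => kempty | S k => ksucc (knat k) end.

Definition komega : kset := ksup knat (fun _ _ => True).

Lemma forces_Ind_komega w r : forces w (scons komega r) (Ind 0).
Proof.
  simpl. split.
  - exists kempty. split.
    + exists 0. split; [exists w; split; simpl; auto|apply keq_refl].
    + intros z v _ Hz. exact (kmem_kempty _ _ Hz).
  - intros x t _ [n [_ Hn]]. simpl in Hn.
    exists (knat (S n)). split; [|split; [|split]].
    + exists (S n). split; [exists t; split; simpl; auto|apply keq_refl].
    + apply kmem_ksucc. left; exact Hn.
    + intros z u Hu Hz. apply kmem_ksucc. right. eapply kmem_keq_r; eauto.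
    + intros z u Hu Hz. apply kmem_ksucc in Hz. destruct Hz as [Hz|Hz].
      * right. eapply keq_trans; [exact Hz|]. apply keq_sym. eapply keq_mono; eauto.
      * left. eapply kmem_keq_r; [apply keq_sym, Hn|exact Hu|exact Hz].
Qed.

Lemma kmem_knat_Ind a w r n : forces w (scons a r) (Ind 0) -> kmem (knat n) a w.
Proof.
  simpl. intros [[e [He1 He2]] Hs]. induction n as [|n IH]; simpl.
  - eapply kmem_keq_l; [|exact He1]. apply keq_kempty. exact He2.
  - destruct (Hs (knat n) w (wle_refl _) IH) as [s [Hs1 [Hs2 [Hs3 Hs4]]]].
    eapply kmem_keq_l; [|exact Hs1]. apply keq_ext. intros u Hu z.
    rewrite kmem_ksucc. split.
    + intros Hz. destruct (Hs4 z u Hu Hz) as [H|H]; [right; exact H|left; exact H].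
    + intros [H|H].
      * eapply kmem_keq_l; [apply keq_sym, H|]. eapply kmem_mono; eauto.
      * exact (Hs3 z u Hu H).
Qed.

Lemma forces_Ax_inf w r : forces w r Ax_inf.
Proof.
  exists komega. split; [apply forces_Ind_komega|].
  intros a v _ Ha z t Ht [n [_ Hz]]. simpl in Hz.
  eapply kmem_keq_l; [apply keq_sym, Hz|].
  eapply kmem_knat_Ind, forces_mono; eauto.
Qed.

Theorem IKP_forced q : IKP q -> forall w r, forces w r q.
Proof.
  destruct 1; intros w r.
  - apply forces_Ax_ext.
  - apply forces_Ax_pair.
  - apply forces_Ax_union.
  - apply forces_Ax_inf.
  - apply forces_Ax_sep.
  - apply forces_Ax_coll.
  - apply forces_Ax_ind.
Qed.

Theorem Provable_IKP_forced p : Provable IKP p -> forall w r, forces w r p.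
Proof.
  intros [G [HG Hp]] w r. apply (prf_sound _ _ Hp). intros q Hq. apply IKP_forced, HG, Hq.
Qed.

End KripkeSets.

Arguments kset : clear implicits.

Ltac from_context := apply P_ax; simpl; repeat (first [left; reflexivity | right]).

Lemma prf_IsOne_elim G o x t :
  prf G (IsOne o) -> prf G (Mem x o) -> prf G (Mem t x) -> prf G Bot.
Proof.
  intros Ho Hx Ht.
  pose proof (P_allE _ _ x Ho) as K. cbn in K.
  pose proof (P_allE _ _ t (P_impE _ _ _ (P_andE1 _ _ _ K) Hx)) as K'. cbn in K'.
  exact (P_impE _ _ _ K' Ht).
Qed.

Lemma prf_IsOne_intro G o x :
  prf G (IsOne o) -> prf G (All (Imp (Mem 0 (S x)) Bot)) -> prf G (Mem x o).
Proof.
  intros Ho Hx.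
  pose proof (P_allE _ _ x Ho) as K. cbn in K.
  exact (P_impE _ _ _ (P_andE2 _ _ _ K) Hx).
Qed.

Lemma prf_ext G x y :
  prf G Ax_ext -> prf G (All (Iff (Mem 0 (S x)) (Mem 0 (S y)))) -> prf G (Eq x y).
Proof.
  intros He Hxy. pose proof (P_allE _ _ x He) as K. cbn in K.
  pose proof (P_allE _ _ y K) as K'. cbn in K'. exact (P_impE _ _ _ K' Hxy).
Qed.

Lemma prf_empty_elim G x t : prf G (All (Imp (Mem 0 (S x)) Bot)) -> prf G (Mem t x) -> prf G Bot.
Proof.
  intros Hx Ht. pose proof (P_allE _ _ t Hx) as K. cbn in K. exact (P_impE _ _ _ K Ht).
Qed.

(* All clauses are vacuous because members of 1 are empty, except [γ ∈ 1], which holds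
   because [γ ⊆ β ∈ 1] makes [γ] empty. *)
Lemma prf_One_PlOrd : prf [] One_PlOrd.
Proof.
  unfold One_PlOrd. apply P_allI. simpl. apply P_impI.
  unfold PlOrd, Ord, Trans, BAll, Sub, relpl. apply P_andI; [apply P_andI|].
  - apply P_allI; apply P_impI; apply P_allI; apply P_impI; apply P_botE.
    apply (prf_IsOne_elim _ 2 1 0); from_context.
  - apply P_allI; apply P_impI; apply P_allI; apply P_impI; apply P_allI; apply P_impI.
    apply P_botE. apply (prf_IsOne_elim _ 3 2 1); from_context.
  - apply P_allI; apply P_impI; apply P_allI; apply P_impI; apply P_impI. apply P_andI.
    + apply prf_IsOne_intro; [from_context|]. apply P_allI; apply P_impI.
      apply (prf_IsOne_elim _ 3 2 0); [from_context|from_context|].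
      apply (P_impE _ (Mem 0 1)); [|from_context].
      apply (P_allE _ (Imp (Mem 0 2) (Mem 0 3)) 0); from_context.
    + apply P_allI; apply P_impI; apply P_impI; apply P_botE.
      apply (prf_IsOne_elim _ 3 0 2); from_context.
Qed.

(* 1 is carved out of the least inductive set by separating its empty elements;
   extensionality identifies any empty set with the one in that set. *)
Lemma prf_One_exists : prf [Ax_inf; Ax_ext; Ax_sep (BAll 0 Bot)] One_exists.
Proof.
  unfold One_exists.
  apply (P_exE _ (And (Ind 0) (All (Imp (Ind 0) (Sub 1 0))))); [from_context|]. cbn.
  apply (P_exE _ (And (Mem 0 1) (BAll 0 Bot))); [eapply P_andE1, P_andE1; from_context|]. cbn.
  apply (P_exE _ (All (Iff (Mem 0 1) (And (Mem 0 3) (All (Imp (Mem 0 1) Bot)))))).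
  { apply (P_allE _ (Ex (All (Iff (Mem 0 1) (And (Mem 0 2) (All (Imp (Mem 0 1) Bot)))))) 1).
    from_context. }
  cbn. apply (P_exI _ _ 0). cbn. apply P_allI. cbn.
  apply P_andI; apply P_impI.
  - apply (P_andE2 _ (Mem 0 3)). apply (P_impE _ (Mem 0 1)); [|from_context].
    eapply P_andE1.
    apply (P_allE _ (Iff (Mem 0 2) (And (Mem 0 4) (All (Imp (Mem 0 1) Bot)))) 0).
    from_context.
  - apply (P_impE _ (And (Mem 0 3) (All (Imp (Mem 0 1) Bot)))).
    + eapply P_andE2.
      apply (P_allE _ (Iff (Mem 0 2) (And (Mem 0 4) (All (Imp (Mem 0 1) Bot)))) 0).
      from_context.
    + apply P_andI; [|from_context].
      apply (P_subst _ (Mem 0 4) 2 0).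
      * apply prf_ext; [from_context|]. apply P_allI. cbn.
        apply P_andI; apply P_impI; apply P_botE.
        -- apply (prf_empty_elim _ 3 0); [eapply P_andE2; from_context|from_context].
        -- apply (prf_empty_elim _ 1 0); from_context.
      * apply (P_andE1 _ _ (All (Imp (Mem 0 3) Bot))). from_context.
Qed.

Lemma Provable_One_PlOrd : Provable IKP One_PlOrd.
Proof. exists []; split; [intros q []|apply prf_One_PlOrd]. Qed.

Lemma Provable_One_exists : Provable IKP One_exists.
Proof.
  exists [Ax_inf; Ax_ext; Ax_sep (BAll 0 Bot)]; split; [|apply prf_One_exists].
  intros q [<-|[<-|[<-|[]]]]; repeat constructor.
Qed.

(** * A root below countably many leaves *)

Definition node : Type := option nat.

Definition node_le (u v : node) : Prop := u = None \/ u = v.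

Lemma node_le_refl u : node_le u u.
Proof. right; reflexivity. Qed.

Lemma node_le_trans u v t : node_le u v -> node_le v t -> node_le u t.
Proof. intros [->| ->] H; [left|]; auto. Qed.

Definition node_of_nat (n : nat) : node := match n with 0 => None | S k => Some k end.

Lemma node_of_nat_onto u : exists n, node_of_nat n = u.
Proof. destruct u as [k|]; [exists (S k)|exists 0]; reflexivity. Qed.

Definition node_frame : countable_frame :=
  {| wle := node_le; wle_refl := node_le_refl; wle_trans := node_le_trans;
     world_of_nat_onto := node_of_nat_onto |}.

Definition leaf_in (A : nat -> Prop) (v : node) : Prop :=
  match v with None => False | Some n => A n end.

Lemma leaf_in_mono A v t : leaf_in A v -> node_le v t -> leaf_in A t.
Proof. intros H [->| <-]; [destruct H|exact H]. Qed.

Definition kone : kset node_frame := ksup (fun _ => kempty) (fun _ _ => True).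

Definition kone_on (A : nat -> Prop) : kset node_frame :=
  ksup (fun _ => kempty) (fun _ (v : node_frame) => leaf_in A v).

Lemma kmem_kone z v : kmem z kone v <-> keq z kempty v.
Proof.
  split.
  - intros [j [_ H]]; exact H.
  - intros H; exists 0; split; [exists v; split; [apply node_le_refl|exact I]|exact H].
Qed.

Lemma kmem_kone_on z A v : kmem z (kone_on A) v <-> leaf_in A v /\ keq z kempty v.
Proof.
  split.
  - intros [j [[u [Hu Hs]] H]]; split; [exact (leaf_in_mono _ _ _ Hs Hu)|exact H].
  - intros [Hs H]; exists 0; split; [exists v; split; [apply node_le_refl|exact Hs]|exact H].
Qed.

Lemma forces_IsOne_kone w r : forces w (scons kone r) (IsOne 0).
Proof.
  simpl; intros z; split.
  - intros v _ Hz d t Ht Hd. apply kmem_kone in Hz.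
    apply (kmem_kempty d t), (kmem_keq_r _ _ _ _ _ Hz Ht Hd).
  - intros v _ Hz. apply kmem_kone, keq_kempty. exact Hz.
Qed.

Lemma forces_Sub_kone_on A w r k : r k = kone -> forces w (scons (kone_on A) r) (Sub 0 (S k)).
Proof.
  intros Hk. simpl. rewrite Hk. intros z v _ Hz.
  apply kmem_kone. apply kmem_kone_on in Hz. apply Hz.
Qed.

Lemma forces_relpl_kone_on A w r a : forces w (scons (kone_on A) r) (relpl a 0).
Proof.
  simpl. intros d v _ Hd e v' Hv' _ v'' Hv'' Hsub.
  apply kmem_kone_on in Hd. destruct Hd as [Hs Hd].
  apply kmem_kone_on. split.
  - exact (leaf_in_mono _ _ _ (leaf_in_mono _ _ _ Hs Hv') Hv'').
  - apply keq_kempty. intros z u Hu Hz.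
    apply (kmem_kempty z u). eapply kmem_keq_r; [exact Hd| |exact (Hsub z u Hu Hz)].
    eapply node_le_trans; [exact Hv'|eapply node_le_trans; eauto].
Qed.

(* Cantor's diagonal argument: the member [kelem y j] that realises the diagonal set
   would contain [∅] at leaf [j] iff it does not. *)
Lemma not_all_kone_on_kmem_root (y : kset node_frame) : ~ (forall A, kmem (kone_on A) y None).
Proof.
  intros H. set (T := fun j n => kmem kempty (kelem y j) (Some n)).
  destruct (H (fun n => ~ T n n)) as [j [_ Hj]].
  assert (K : ~ T j j <-> T j j).
  { split.
    - intros Hn. apply (kmem_keq_r _ _ _ _ _ Hj (or_introl eq_refl)).
      apply kmem_kone_on. split; [exact Hn|apply keq_refl].
    - intros Hn.
      assert (M : kmem kempty (kone_on (fun n => ~ T n n)) (Some j))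
        by (eapply kmem_keq_r; [apply keq_sym, Hj|left; reflexivity|exact Hn]).
      apply kmem_kone_on in M. exact (proj1 M). }
  destruct K as [K1 K2].
  assert (nT : ~ T j j) by (intros Ht; exact (K2 Ht Ht)).
  exact (nT (K1 nT)).
Qed.

Theorem proposition3p2 :
  Provable IKP One_exists /\ Provable IKP One_PlOrd /\
  ~ Provable IKP One_plsucc_exists /\ ~ Provable IKP PlUb.
Proof.
  set (r := fun _ : nat => @kempty node_frame).
  split; [exact Provable_One_exists|split; [exact Provable_One_PlOrd|split]].
  - intros H.
    destruct (Provable_IKP_forced (F := node_frame) _ H None r kone None (node_le_refl _) (forces_IsOne_kone _ _))
      as [y Hy].
    apply (not_all_kone_on_kmem_root y). intros A.
    apply (proj2 (Hy (kone_on A)) None (node_le_refl _)).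
    split; [apply forces_Sub_kone_on; reflexivity|apply forces_relpl_kone_on].
  - intros H.
    pose proof (Provable_IKP_forced (F := node_frame) _ Provable_One_PlOrd None r kone None (node_le_refl _)
                  (forces_IsOne_kone _ _)) as Hone.
    destruct (Provable_IKP_forced (F := node_frame) _ H None r kone None (node_le_refl _) Hone) as [b [[_ Hb] Hmem]].
    apply (not_all_kone_on_kmem_root b). intros A.
    apply (Hb kone None (node_le_refl _) Hmem (kone_on A) None (node_le_refl _)
             (forces_Sub_kone_on _ _ _ 0 eq_refl) None (node_le_refl _)).
    apply forces_relpl_kone_on.
Qed.
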